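(* Fix $m\ge1$ and $n\ge0$. Every labelled sequent derivable in $\mathsf{Ldm}_{n}^{m}\mathsf{L}$ is valid.
   Context: Language. $Ag=\{1,\dots,m\}$, $Var$ a countable set of propositional variables; formulas of $\mathcal{L}^m$: $\phi ::= p \mid \overline{p} \mid (\phi\wedge\phi) \mid (\phi\vee\phi) \mid \Box\phi \mid \Diamond\phi \mid [i]\phi \mid \langle i\rangle\phi$. Models. An $\mathsf{Ldm}_{n}^{m}$-frame is $(W,\{\mathcal{R}_i\}_{i\in Ag})$ with $W\neq\emptyset$ and: (C1) each $\mathcal{R}_i$ is an equivalence relation on $W$; (C2) for all $u_1,\dots,u_m\in W$, $\bigcap_{i\in Ag}\mathcal{R}_i(u_i)\neq\emptyset$, where $\mathcal{R}_i(w)=\{v:(w,v)\in\mathcal{R}_i\}$; (C3) only if $n>0$: for each $i$ and all $w_0,\dots,w_n\in W$ there are $0\le k<j\le n$ with $(w_k,w_j)\in\mathcal{R}_i$. A model adds $V:Var\to\mathcal{P}(W)$. Satisfaction: $w\Vdash p$ iff $w\in V(p)$; $w\Vdash\overline{p}$ iff $w\notin V(p)$; $\wedge,\vee$ as usual; $\Box,\Diamond$ quantify over all of $W$; $[i],\langle i\rangle$ quantify (universally, existentially) over $\mathcal{R}_i(w)$. Labelled sequents $\mathcal{R},\Gamma$: $\mathcal{R}$ a multiset of relational atoms $\mathcal{R}_ixy$, $\Gamma$ a multiset of labelled formulas $x:\phi$. Given a model $M$ with domain $W$ and an interpretation $I$ mapping labels to worlds, $\mathcal{R},\Gamma$ is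 satisfied in $M$ under $I$ iff, if $(x^I,y^I)\in\mathcal{R}_i$ holds for all relational atoms $\mathcal{R}_ixy\in\mathcal{R}$, then $M,z^I\Vdash\phi$ for some $z:\phi\in\Gamma$. A sequent is valid iff it is satisfied in every $\mathsf{Ldm}_{n}^{m}$-model under every interpretation. Rules of $\mathsf{Ldm}_{n}^{m}\mathsf{L}$ (premise(s) / conclusion): $(\mathsf{id})$: / $\mathcal{R}, w:p, w:\overline{p},\Gamma$. $(\wedge)$: $\mathcal{R}, w:\phi\wedge\psi, w:\phi,\Gamma$ and $\mathcal{R}, w:\phi\wedge\psi, w:\psi,\Gamma$ / $\mathcal{R}, w:\phi\wedge\psi,\Gamma$. $(\vee)$: $\mathcal{R}, w:\phi\vee\psi, w:\phi, w:\psi,\Gamma$ / $\mathcal{R}, w:\phi\vee\psi,\Gamma$. $(\Box)$: $\mathcal{R}, w:\Box\phi, v:\phi,\Gamma$ / $\mathcal{R}, w:\Box\phi,\Gamma$ ($v$ fresh). $(\Diamond)$: $\mathcal{R}, w:\Diamond\phi, u:\phi,\Gamma$ / $\mathcal{R}, w:\Diamond\phi,\Gamma$. $(\mathsf{IOA})$: $\mathcal{R},\mathcal{R}_1u_1v,\dots,\mathcal{R}_mu_mv,\Gamma$ / $\mathcal{R},\Gamma$ ($v$ fresh). $([i])$: $\mathcal{R},\mathcal{R}_iwv, w:[i]\phi, v:\phi,\Gamma$ / $\mathcal{R}, w:[i]\phi,\Gamma$ ($v$ fresh). $(\mathsf{Pr}_i)$: $\mathcal{R}, w:\langle i\rangle\phi,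 u:\phi,\Gamma$ / $\mathcal{R}, w:\langle i\rangle\phi,\Gamma$, applicable only if $w=u$ or there are labels $w=z_0,\dots,z_k=u$ ($k\ge1$) with $\mathcal{R}_iz_lz_{l+1}\in\mathcal{R}$ or $\mathcal{R}_iz_{l+1}z_l\in\mathcal{R}$ for each $l<k$. $(\mathsf{APC}^i_n)$ (only if $n>0$): premises $\mathcal{R},\mathcal{R}_iw_kw_j,\Gamma$ for all $0\le k\le n-1$, $k+1\le j\le n$ / $\mathcal{R},\Gamma$. ''Fresh'' means not occurring in the conclusion. One copy of $([i])$, $(\mathsf{Pr}_i)$, $(\mathsf{APC}^i_n)$ for each $i\in Ag$. *)

From mathcomp Require Import all_boot.
From Stdlib Require Import List Permutation.
Set Implicit Arguments. Unset Strict Implicit. Unset Printing Implicit Defensive.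

(* Formulas of L^m in negation normal form; agents Ag = 'I_m (m agents). *)
Inductive form (m : nat) : Type :=
  | FVar  : nat -> form m
  | FNVar : nat -> form m
  | FAnd  : form m -> form m -> form m
  | FOr   : form m -> form m -> form m
  | FBox  : form m -> form m
  | FDia  : form m -> form m
  | FAgB  : 'I_m -> form m -> form m
  | FAgD  : 'I_m -> form m -> form m.

Definition ratom (m : nat) : Type := ('I_m * nat * nat)%type.
Definition lform (m : nat) : Type := (nat * form m)%type.
(* labelled sequent R, Gamma; multisets as lists, closed under permutation below *)
Definition sequent (m : nat) : Type := (list (ratom m) * list (lform m))%type.

Definition labels (m : nat) (R : list (ratom m)) (G : list (lform m)) : list nat :=
  flat_map (fun a : ratom m => let '(_, x, y) := a in x :: y :: nil) R
  ++ map (fun l : lform m => fst l) G.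

Definition fresh (m : nat) (v : nat) (R : list (ratom m)) (G : list (lform m)) : Prop :=
  ~ In v (labels R G).

Inductive connected (m : nat) (i : 'I_m) (R : list (ratom m)) : nat -> nat -> Prop :=
  | conn_refl : forall w, connected i R w w
  | conn_step : forall z0 z1 u,
      (In (i, z0, z1) R \/ In (i, z1, z0) R) ->
      connected i R z1 u -> connected i R z0 u.

Inductive derivable (m n : nat) : list (ratom m) -> list (lform m) -> Prop :=
  | d_perm : forall R R' G G',
      Permutation R R' -> Permutation G G' ->
      derivable n R G -> derivable n R' G'
  | d_id : forall R G w p,
      derivable n R ((w, FVar m p) :: (w, FNVar m p) :: G)
  | d_and : forall R G w a b,
      derivable n R ((w, FAnd a b) :: (w, a) :: G) ->
      derivable n R ((w, FAnd a b) :: (w, b) :: G) ->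
      derivable n R ((w, FAnd a b) :: G)
  | d_or : forall R G w a b,
      derivable n R ((w, FOr a b) :: (w, a) :: (w, b) :: G) ->
      derivable n R ((w, FOr a b) :: G)
  | d_box : forall R G w v a,
      fresh v R ((w, FBox a) :: G) ->
      derivable n R ((w, FBox a) :: (v, a) :: G) ->
      derivable n R ((w, FBox a) :: G)
  | d_dia : forall R G w u a,
      derivable n R ((w, FDia a) :: (u, a) :: G) ->
      derivable n R ((w, FDia a) :: G)
  | d_IOA : forall R G (u : 'I_m -> nat) v,
      fresh v R G ->
      derivable n (map (fun i => (i, u i, v)) (enum 'I_m) ++ R) G ->
      derivable n R G
  | d_agB : forall R G (i : 'I_m) w v a,
      fresh v R ((w, FAgB i a) :: G) ->
      derivable n ((i, w, v) :: R) ((w, FAgB i a) :: (v, a) :: G) ->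
      derivable n R ((w, FAgB i a) :: G)
  | d_Pr : forall R G (i : 'I_m) w u a,
      connected i R w u ->
      derivable n R ((w, FAgD i a) :: (u, a) :: G) ->
      derivable n R ((w, FAgD i a) :: G)
  | d_APC : forall R G (i : 'I_m) (w : nat -> nat),
      0 < n ->
      (forall k j, k < j <= n -> derivable n ((i, w k, w j) :: R) G) ->
      derivable n R G.

Definition is_frame (m n : nat) (W : Type) (Rel : 'I_m -> W -> W -> Prop) : Prop :=
  inhabited W /\
  (forall i, (forall x, Rel i x x) /\ (forall x y, Rel i x y -> Rel i y x) /\
             (forall x y z, Rel i x y -> Rel i y z -> Rel i x z)) /\
  (forall u : 'I_m -> W, exists w, forall i, Rel i (u i) w) /\
  (0 < n -> forall i (w : nat -> W),
      exists k j, k < j <= n /\ Rel i (w k) (w j)).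

Fixpoint sat (m : nat) (W : Type) (Rel : 'I_m -> W -> W -> Prop) (V : nat -> W -> Prop)
         (w : W) (f : form m) : Prop :=
  match f with
  | FVar p => V p w
  | FNVar p => ~ V p w
  | FAnd a b => sat Rel V w a /\ sat Rel V w b
  | FOr a b => sat Rel V w a \/ sat Rel V w b
  | FBox a => forall v, sat Rel V v a
  | FDia a => exists v, sat Rel V v a
  | FAgB i a => forall v, Rel i w v -> sat Rel V v a
  | FAgD i a => exists v, Rel i w v /\ sat Rel V v a
  end.

Definition valid (m n : nat) (R : list (ratom m)) (G : list (lform m)) : Prop :=
  forall (W : Type) (Rel : 'I_m -> W -> W -> Prop) (V : nat -> W -> Prop),
    is_frame n Rel ->
    forall I : nat -> W,
      (forall i x y, In (i, x, y) R -> Rel i (I x) (I y)) ->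
      exists z f, In (z, f) G /\ sat Rel V (I z) f.

(* Soundness is checked rule by rule in an arbitrary model: each rule preserves
   truth under every interpretation respecting its relational atoms.  For the
   rules with a fresh label v ((Box), ([i]), (IOA)), the interpretation is
   changed at v only, which affects neither the relational atoms nor the side
   formulas of the conclusion; (IOA) and (APC) are exactly the frame conditions
   (C2) and (C3), and (Pr_i) uses that each R_i is an equivalence relation. *)

From mathcomp Require Import all_boot.
From Stdlib Require Import List Permutation Classical_Prop.

Set Implicit Arguments.
Unset Strict Implicit.
Unset Printing Implicit Defensive.

Lemma fresh_ratom (m : nat) v (R : list (ratom m)) G i x y :
  fresh v R G -> In (i, x, y) R -> x <> v /\ y <> v.
Proof.
move=> Hv Hin; split=> E; apply: Hv; rewrite /labels in_app_iff; left;
  apply/in_flat_map; exists (i, x, y); split=> //=; subst; auto.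
Qed.

Lemma fresh_lform (m : nat) v (R : list (ratom m)) G z f :
  fresh v R G -> In (z, f) G -> z <> v.
Proof.
move=> Hv Hin E; apply: Hv; rewrite /labels in_app_iff; right;
  apply/in_map_iff; exists (z, f); subst; auto.
Qed.

Definition upd {W : Type} (I : nat -> W) (v : nat) (x : W) : nat -> W :=
  fun y => if y == v then x else I y.

Lemma upd_same {W : Type} (I : nat -> W) v x : upd I v x v = x.
Proof. by rewrite /upd eqxx. Qed.

Lemma upd_other {W : Type} (I : nat -> W) v x y : y <> v -> upd I v x y = I y.
Proof. by rewrite /upd => /eqP/negbTE ->. Qed.

Section Soundness.

Variables (m n : nat) (W : Type) (Rel : 'I_m -> W -> W -> Prop) (V : nat -> W -> Prop).

Definition respects (I : nat -> W) (R : list (ratom m)) : Prop :=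
  forall i x y, In (i, x, y) R -> Rel i (I x) (I y).

Definition true_in (I : nat -> W) (G : list (lform m)) : Prop :=
  exists z f, In (z, f) G /\ sat Rel V (I z) f.

Definition model_valid (R : list (ratom m)) (G : list (lform m)) : Prop :=
  forall I, respects I R -> true_in I G.

Lemma respects_cons I i x y R :
  respects I ((i, x, y) :: R) <-> Rel i (I x) (I y) /\ respects I R.
Proof.
split=> [HR | [Hxy HR] j x' y' [[<- <- <-] | /HR] //].
by split=> [|j x' y' Hin]; apply: HR; [left | right].
Qed.

Lemma true_in_cons I z f G :
  true_in I ((z, f) :: G) <-> sat Rel V (I z) f \/ true_in I G.
Proof.
split=> [[z' [f' [[[<- <-] | Hin] Hs]]] | [Hs | [z' [f' [Hin Hs]]]]].
- by left.
- by right; exists z', f'.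
- by exists z, f; split=> //; left.
- by exists z', f'; split=> //; right.
Qed.

Lemma true_in_perm I G G' : Permutation G G' -> true_in I G -> true_in I G'.
Proof.
by move=> PG [z [f [Hin Hs]]]; exists z, f; split=> //; apply: Permutation_in Hin.
Qed.

Lemma respects_upd_fresh I v x R G :
  fresh v R G -> respects I R -> respects (upd I v x) R.
Proof.
move=> Hv HR i y z Hin; have [Hy Hz] := fresh_ratom Hv Hin.
by rewrite !upd_other //; apply: HR.
Qed.

Lemma true_in_upd_fresh I v x R G :
  fresh v R G -> true_in (upd I v x) G <-> true_in I G.
Proof.
move=> Hv; split=> -[z [f [Hin Hs]]]; exists z, f; split=> //;
  by move: Hs; rewrite upd_other //; apply: fresh_lform Hv Hin.
Qed.

Lemma fresh_instance (P : W -> Prop) I v a R R' G :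
  fresh v R G ->
  (forall x, P x -> respects (upd I v x) R') ->
  model_valid R' ((v, a) :: G) ->
  (forall x, P x -> sat Rel V x a) \/ true_in I G.
Proof.
move=> Hv HR' IH; case: (classic (true_in I G)) => [|notG]; [by right | left=> x Px].
have := IH _ (HR' x Px); rewrite true_in_cons upd_same (true_in_upd_fresh _ _ Hv).
by case.
Qed.

Lemma perm_sound R R' G G' :
  Permutation R R' -> Permutation G G' -> model_valid R G -> model_valid R' G'.
Proof.
move=> PR PG IH I HR'; apply: true_in_perm PG _; apply: IH => i x y Hin.
by apply: HR'; apply: Permutation_in Hin.
Qed.

Lemma id_sound R G w p : model_valid R ((w, FVar m p) :: (w, FNVar m p) :: G).
Proof. by move=> I _; rewrite !true_in_cons /=; case: (classic (V p (I w))); tauto. Qed.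

Lemma and_sound R G w a b :
  model_valid R ((w, FAnd a b) :: (w, a) :: G) ->
  model_valid R ((w, FAnd a b) :: (w, b) :: G) ->
  model_valid R ((w, FAnd a b) :: G).
Proof.
move=> IHa IHb I HR; move: (IHa I HR) (IHb I HR); rewrite !true_in_cons /=; tauto.
Qed.

Lemma or_sound R G w a b :
  model_valid R ((w, FOr a b) :: (w, a) :: (w, b) :: G) ->
  model_valid R ((w, FOr a b) :: G).
Proof. by move=> IH I /IH; rewrite !true_in_cons /=; tauto. Qed.

Lemma dia_sound R G w u a :
  model_valid R ((w, FDia a) :: (u, a) :: G) -> model_valid R ((w, FDia a) :: G).
Proof.
move=> IH I /IH; rewrite !true_in_cons /= => -[|[]]; try tauto.
by move=> Hu; left; exists (I u).
Qed.

Lemma box_sound R G w v a :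
  fresh v R ((w, FBox a) :: G) ->
  model_valid R ((w, FBox a) :: (v, a) :: G) -> model_valid R ((w, FBox a) :: G).
Proof.
move=> Hv IH I HR.
have IH' : model_valid R ((v, a) :: (w, FBox a) :: G).
  by apply: perm_sound IH; [apply: Permutation_refl | apply: perm_swap].
have [Ha | //] := fresh_instance (P := fun _ => True) Hv
  (fun x _ => respects_upd_fresh x Hv HR) IH'.
by rewrite true_in_cons; left=> x; apply: Ha.
Qed.

Lemma agB_sound R G i w v a :
  fresh v R ((w, FAgB i a) :: G) ->
  model_valid ((i, w, v) :: R) ((w, FAgB i a) :: (v, a) :: G) ->
  model_valid R ((w, FAgB i a) :: G).
Proof.
move=> Hv IH I HR.
have IH' : model_valid ((i, w, v) :: R) ((v, a) :: (w, FAgB i a) :: G).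
  by apply: perm_sound IH; [apply: Permutation_refl | apply: perm_swap].
have Hwv : w <> v by apply: fresh_lform Hv (in_eq _ _).
have HR' x : Rel i (I w) x -> respects (upd I v x) ((i, w, v) :: R).
  by move=> Hx; rewrite respects_cons upd_same upd_other //;
    split=> //; apply: respects_upd_fresh Hv HR.
have [Ha | //] := fresh_instance Hv HR' IH'.
by rewrite true_in_cons; left.
Qed.

Hypothesis frame : is_frame n Rel.

Lemma frame_refl i x : Rel i x x.
Proof. by case: frame => _ [/(_ i) [Hr _] _]; apply: Hr. Qed.

Lemma frame_sym i x y : Rel i x y -> Rel i y x.
Proof. by case: frame => _ [/(_ i) [_ [Hs _]] _]; apply: Hs. Qed.

Lemma frame_trans i x y z : Rel i x y -> Rel i y z -> Rel i x z.
Proof. by case: frame => _ [/(_ i) [_ [_ Ht]] _]; apply: Ht. Qed.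

Lemma connected_rel I R i w u :
  respects I R -> connected i R w u -> Rel i (I w) (I u).
Proof.
move=> HR; elim=> [x | z0 z1 u' [Hin | Hin] _ IH]; first exact: frame_refl.
- exact: frame_trans (HR _ _ _ Hin) IH.
- exact: frame_trans (frame_sym (HR _ _ _ Hin)) IH.
Qed.

Lemma Pr_sound R G i w u a :
  connected i R w u ->
  model_valid R ((w, FAgD i a) :: (u, a) :: G) -> model_valid R ((w, FAgD i a) :: G).
Proof.
move=> Hwu IH I HR; move: (IH I HR); rewrite !true_in_cons /= => -[|[]]; try tauto.
by move=> Hu; left; exists (I u); split=> //; apply: connected_rel Hwu.
Qed.

Lemma IOA_sound R G (u : 'I_m -> nat) v :
  fresh v R G ->
  model_valid (map (fun i => (i, u i, v)) (enum 'I_m) ++ R) G -> model_valid R G.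
Proof.
move=> Hv IH I HR.
have [x Hx] : exists x, forall i, Rel i (I (u i)) x.
  by case: frame => _ [_ [/(_ (fun i => I (u i))) C2 _]].
apply/(true_in_upd_fresh _ x Hv)/IH => i y z; rewrite in_app_iff.
case=> [/in_map_iff [j [[<- <- <-] _]] | Hin].
- rewrite upd_same /upd; case: eqP => _; [exact: frame_refl | exact: Hx].
- exact: respects_upd_fresh Hv HR _ _ _ Hin.
Qed.

Lemma APC_sound R G i (w : nat -> nat) :
  0 < n ->
  (forall k j, k < j <= n -> model_valid ((i, w k, w j) :: R) G) ->
  model_valid R G.
Proof.
move=> n_gt0 IH I HR.
have [k [j [Hkj Hr]]] : exists k j, k < j <= n /\ Rel i (I (w k)) (I (w j)).
  by case: frame => _ [_ [_ /(_ n_gt0 i (fun l => I (w l)))]].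
by apply: (IH k j Hkj I); rewrite respects_cons.
Qed.

Lemma derivable_model_valid R G : derivable n R G -> model_valid R G.
Proof.
elim=> {R G}.
- by move=> R R' G G' PR PG _; apply: perm_sound.
- exact: id_sound.
- by move=> R G w a b _ IHa _; apply: and_sound.
- by move=> R G w a b _; apply: or_sound.
- by move=> R G w v a Hv _; apply: box_sound.
- by move=> R G w u a _; apply: dia_sound.
- by move=> R G u v Hv _; apply: IOA_sound.
- by move=> R G i w v a Hv _; apply: agB_sound.
- by move=> R G i w u a Hwu _; apply: Pr_sound.
- by move=> R G i w n_gt0 _; apply: APC_sound.
Qed.

End Soundness.

Theorem theorem4 (m n : nat) (Hm : 1 <= m)
  (R : list (ratom m)) (G : list (lform m)) :
  derivable n R G -> valid n R G.
Proof.
by move=> D W Rel V frame; apply: derivable_model_valid D.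
Qed.
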